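(* Consider a market with $n$ buyers and $m$ sellers trading units of a single item. Buyer $i$ has a bid $b_i \in \mathbb{R}_+$ and a quantity $\mu_i \in \mathbb{R}_+$ (it is willing to buy up to $\mu_i$ units at a per-unit price of at most $b_i$). Seller $j$ has an ask (cost) $c_j \in \mathbb{R}_+$ and a quantity $\lambda_j \in \mathbb{R}_+$. Let $\mathcal{Z}$ be a feature space. Suppose that, conditioned on each feature vector $z \in \mathcal{Z}$, the bids and costs are independent with $b_i \sim F_i^z$ and $c_j \sim G_j^z$, where $F_i^z, G_j^z$ are cumulative distribution functions. For a pricing policy $p:\mathcal{Z}\to\mathbb{R}$, the clearing loss is $$\ell^c(p,z,\mathbf{b},\mathbf{c}) = \sum_{i=1}^n \mu_i \max\{b_i - p(z),0\} + \sum_{j=1}^m \lambda_j \max\{p(z)-c_j,0\}.$$ Then the pricing policy that minimizes the expected clearing loss (conditional on each $z$) is the solution $p(z)$ of $$\sum_{i=1}^n \mu_i\bigl(1-F_i^z(p(z))\bigr) = \sum_{j=1}^m \lambda_j G_j^z(p(z)),$$ i.e., the policy that balances expected supply and demand.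
   Context: The quantities $\mu_i$ and $\lambda_j$ and the numbers $n,m$ are fixed; only the bids and costs are random given $z$. Expectations are taken over the bids and costs conditional on the feature vector $z$. *)

From HB Require Import structures.
From mathcomp Require Import all_boot all_order all_algebra.
From mathcomp Require Import all_classical all_reals all_analysis.
Set Implicit Arguments. Unset Strict Implicit. Unset Printing Implicit Defensive.
Import Order.TTheory GRing.Theory Num.Theory.
Local Open Scope classical_set_scope.
Local Open Scope ring_scope.

Definition clearing_loss (R : realType) (n m : nat)
  (mu : 'I_n -> R) (lam : 'I_m -> R) (pz : R)
  (bv : 'I_n -> R) (cv : 'I_m -> R) : R :=
  \sum_(i < n) mu i * Num.max (bv i - pz) 0
  + \sum_(j < m) lam j * Num.max (pz - cv j) 0.

Definition expected_clearing_loss (R : realType) (d : measure_display)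
  (Omega : measurableType d) (P : probability Omega R) (n m : nat)
  (mu : 'I_n -> R) (lam : 'I_m -> R) (pz : R)
  (b : 'I_n -> Omega -> R) (c : 'I_m -> Omega -> R) : \bar R :=
  (\int[P]_(w in setT) (clearing_loss mu lam pz (fun i => b i w) (fun j => c j w))%:E)%E.

Definition independent_bids_costs (R : realType) (d : measure_display)
  (Omega : measurableType d) (P : probability Omega R) (n m : nat)
  (b : 'I_n -> Omega -> R) (c : 'I_m -> Omega -> R) : Prop :=
  forall (A : 'I_n -> set R) (B : 'I_m -> set R),
    (forall i, measurable (A i)) -> (forall j, measurable (B j)) ->
    P ((\bigcap_(i in [set: 'I_n]) (b i @^-1` A i))
         `&` (\bigcap_(j in [set: 'I_m]) (c j @^-1` B j)))
    = (\prod_(i < n) P (b i @^-1` A i) * \prod_(j < m) P (c j @^-1` B j))%E.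

From HB Require Import structures.
From mathcomp Require Import all_boot all_order all_algebra.
From mathcomp Require Import all_classical all_reals all_analysis.
From mathcomp Require Import lra measurable_realfun.
Import Order.TTheory GRing.Theory Num.Theory.
Local Open Scope classical_set_scope.
Local Open Scope ring_scope.

(* The clearing loss is convex in the price, and at the price p it has the
   subgradient  supply(p) - demand(p), where demand(p) is the quantity bid
   strictly above p and supply(p) the quantity offered at or below p.  Hence
   loss(q) >= loss(p) + (q - p) (supply(p) - demand(p)) pointwise, and taking
   expectations the correction term vanishes exactly when expected demand
   sum_i mu_i (1 - F_i(p)) equals expected supply sum_j lam_j G_j(p). *)

Section ClearingLoss.
Context {R : realType}.

Lemma maxr_subr_subgrad (x p q : R) :
  Num.max (x - p) 0 <= Num.max (x - q) 0 + (q - p) * (p < x)%R%:R.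
Proof.
rewrite !maxEle; case: (leP (x - p)) => ?; case: (leP (x - q)) => ?;
  case: (ltP p x) => ? /=; lra.
Qed.

Lemma maxr_subl_subgrad (y p q : R) :
  Num.max (p - y) 0 + (q - p) * (y <= p)%R%:R <= Num.max (q - y) 0.
Proof.
rewrite !maxEle; case: (leP (p - y)) => ?; case: (leP (q - y)) => ?;
  case: (leP y p) => ? /=; lra.
Qed.

Definition demand {n} (mu : 'I_n -> R) (p : R) (bv : 'I_n -> R) : R :=
  \sum_(i < n) mu i * (p < bv i)%R%:R.

Definition supply {m} (lam : 'I_m -> R) (p : R) (cv : 'I_m -> R) : R :=
  \sum_(j < m) lam j * (cv j <= p)%R%:R.

Lemma demand_ge0 n (mu : 'I_n -> R) p bv :
  (forall i, 0 <= mu i) -> 0 <= demand mu p bv.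
Proof. by move=> mu_ge0; apply: sumr_ge0 => i _; rewrite mulr_ge0. Qed.

Lemma supply_ge0 m (lam : 'I_m -> R) p cv :
  (forall j, 0 <= lam j) -> 0 <= supply lam p cv.
Proof. by move=> lam_ge0; apply: sumr_ge0 => j _; rewrite mulr_ge0. Qed.

Lemma clearing_loss_ge0 n m (mu : 'I_n -> R) (lam : 'I_m -> R) p bv cv :
  (forall i, 0 <= mu i) -> (forall j, 0 <= lam j) ->
  0 <= clearing_loss mu lam p bv cv.
Proof.
by move=> mu_ge0 lam_ge0; apply: addr_ge0; apply: sumr_ge0 => k _;
  rewrite mulr_ge0 // le_max lexx orbT.
Qed.

Lemma clearing_loss_subgrad n m (mu : 'I_n -> R) (lam : 'I_m -> R)
    (p q : R) (bv : 'I_n -> R) (cv : 'I_m -> R) :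
  (forall i, 0 <= mu i) -> (forall j, 0 <= lam j) ->
  clearing_loss mu lam p bv cv + (q - p) * supply lam p cv
  <= clearing_loss mu lam q bv cv + (q - p) * demand mu p bv.
Proof.
move=> mu_ge0 lam_ge0.
rewrite /clearing_loss /demand /supply !mulr_sumr.
have buyers : \sum_(i < n) mu i * Num.max (bv i - p) 0
    <= \sum_(i < n) (mu i * Num.max (bv i - q) 0
                     + (q - p) * (mu i * (p < bv i)%R%:R)).
  apply: ler_sum => i _; rewrite mulrCA -mulrDr ler_wpM2l //.
  exact: maxr_subr_subgrad.
have sellers : \sum_(j < m) (lam j * Num.max (p - cv j) 0
                     + (q - p) * (lam j * (cv j <= p)%R%:R))
    <= \sum_(j < m) lam j * Num.max (q - cv j) 0.
  apply: ler_sum => j _; rewrite mulrCA -mulrDr ler_wpM2l //.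
  exact: maxr_subl_subgrad.
rewrite big_split /= in buyers; rewrite big_split /= in sellers; lra.
Qed.

End ClearingLoss.

Section BalancedIntegrals.
Context {d : measure_display} {T : measurableType d} {R : realType}.
Context (mu : {measure set T -> \bar R}) {D : set T} (mD : measurable D).
Local Open Scope ereal_scope.

Lemma integral_sum_indic (I : Type) (s : seq I) (a : I -> R) (A : I -> set T) :
  (forall i, 0 <= a i)%R -> (forall i, measurable (A i)) ->
  \int[mu]_(w in D) (\sum_(i <- s) a i * \1_(A i) w)%:E
  = \sum_(i <- s) (a i)%:E * mu (A i `&` D).
Proof.
move=> a_ge0 mA; under eq_integral do rewrite -sumEFin.
rewrite ge0_integral_sum //; last first.
- by move=> i w _; rewrite lee_fin mulr_ge0.
- by move=> i; apply/measurable_EFinP/measurable_funM => //; exact: measurable_indic.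
apply: eq_bigr => i _; under eq_integral do rewrite EFinM.
rewrite ge0_integralZl_EFin ?integral_indic //.
by apply/measurable_EFinP; exact: measurable_indic.
Qed.

Lemma ge0_integralDZl (f X : T -> R) (k : R) :
  (forall w, D w -> 0 <= f w)%R -> (forall w, D w -> 0 <= X w)%R -> (0 <= k)%R ->
  measurable_fun D f -> measurable_fun D X ->
  \int[mu]_(w in D) (f w + k * X w)%:E
  = \int[mu]_(w in D) (f w)%:E + k%:E * \int[mu]_(w in D) (X w)%:E.
Proof.
move=> f_ge0 X_ge0 k_ge0 mf mX.
under eq_integral do rewrite EFinD EFinM.
rewrite ge0_integralD //.
- by rewrite ge0_integralZl_EFin //; exact/measurable_EFinP.
- exact/measurable_EFinP.
- by move=> w Dw; rewrite -EFinM lee_fin mulr_ge0 // X_ge0.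
- by apply: emeasurable_funM => //; exact/measurable_EFinP.
Qed.

(* No subtraction of integrals: the statement stays meaningful when those of
   f and g are infinite. *)
Lemma le_integral_balanced (f g X Y : T -> R) (k : R) :
  (forall w, D w -> 0 <= f w)%R -> (forall w, D w -> 0 <= g w)%R ->
  (forall w, D w -> 0 <= X w)%R -> (forall w, D w -> 0 <= Y w)%R ->
  (0 <= k)%R ->
  measurable_fun D f -> measurable_fun D g ->
  measurable_fun D X -> measurable_fun D Y ->
  (forall w, D w -> f w + k * X w <= g w + k * Y w)%R ->
  \int[mu]_(w in D) (X w)%:E = \int[mu]_(w in D) (Y w)%:E ->
  \int[mu]_(w in D) (X w)%:E \is a fin_num ->
  \int[mu]_(w in D) (f w)%:E <= \int[mu]_(w in D) (g w)%:E.
Proof.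
move=> f_ge0 g_ge0 X_ge0 Y_ge0 k_ge0 mf mg mX mY le_fg EXY EX_fin.
have fin_kEX : k%:E * \int[mu]_(w in D) (X w)%:E \is a fin_num by rewrite fin_numM.
rewrite -(leeD2rE _ _ fin_kEX) [in leRHS]EXY -!ge0_integralDZl //.
apply: ge0_le_integral => //.
- by move=> w Dw; apply: addr_ge0; rewrite ?mulr_ge0 ?f_ge0 ?X_ge0.
- by apply/measurable_EFinP/measurable_funD => //; exact: measurable_funM.
- by apply/measurable_EFinP/measurable_funD => //; exact: measurable_funM.
Qed.

End BalancedIntegrals.

Lemma indic_setE (T : Type) (R : realType) (P : pred T) (w : T) :
  \1_([set w | P w]) w = (P w)%:R :> R.
Proof.
rewrite indicE; have [Pw|nPw] := boolP (P w); first by rewrite mem_set.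
by rewrite memNset //; exact/negP.
Qed.

Lemma setC_ler (T : Type) (R : realType) (f : T -> R) (x : R) :
  ~` [set w | f w <= x] = [set w | x < f w].
Proof. by apply/seteqP; split => w /=; rewrite ltNge => /negP. Qed.

Section ExpectedClearingLoss.
Context {d : measure_display} {Omega : measurableType d} {R : realType}.
Variable P : probability Omega R.

Lemma measurable_ler_set (f : Omega -> R) (x : R) :
  measurable_fun setT f -> measurable [set w | f w <= x].
Proof.
by move=> mf; have := measurable_fun_le measurableT mf (measurable_cst x); rewrite setTI.
Qed.

Lemma measurable_gtr_set (f : Omega -> R) (x : R) :
  measurable_fun setT f -> measurable [set w | x < f w].
Proof. by move=> mf; rewrite -setC_ler; exact/measurableC/measurable_ler_set. Qed.

Lemma probability_gtr (f : Omega -> R) (x : R) : measurable_fun setT f ->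
  P [set w | x < f w] = (1 - P [set w | (f w <= x)%R])%E.
Proof.
by move=> mf; rewrite -setC_ler probability_setC //; exact: measurable_ler_set.
Qed.

Variables (n m : nat) (mu : 'I_n -> R) (lam : 'I_m -> R).
Variables (b : 'I_n -> Omega -> R) (c : 'I_m -> Omega -> R).
Hypotheses (mu_ge0 : forall i, 0 <= mu i) (lam_ge0 : forall j, 0 <= lam j).
Hypotheses (mb : forall i, measurable_fun setT (b i))
           (mc : forall j, measurable_fun setT (c j)).

Lemma demand_indicE p w :
  demand mu p (b^~ w) = \sum_(i < n) mu i * \1_([set w | p < b i w]) w.
Proof. by apply: eq_bigr => i _; rewrite indic_setE. Qed.

Lemma supply_indicE p w :
  supply lam p (c^~ w) = \sum_(j < m) lam j * \1_([set w | c j w <= p]) w.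
Proof. by apply: eq_bigr => j _; rewrite indic_setE. Qed.

Lemma measurable_demand p : measurable_fun setT (fun w => demand mu p (b^~ w)).
Proof.
rewrite (funext (demand_indicE p)); apply: measurable_sum => i.
by apply/measurable_funM => //; apply/measurable_indic/measurable_gtr_set.
Qed.

Lemma measurable_supply p : measurable_fun setT (fun w => supply lam p (c^~ w)).
Proof.
rewrite (funext (supply_indicE p)); apply: measurable_sum => j.
by apply/measurable_funM => //; apply/measurable_indic/measurable_ler_set.
Qed.

Lemma measurable_clearing_loss p :
  measurable_fun setT (fun w => clearing_loss mu lam p (b^~ w) (c^~ w)).
Proof.
apply: measurable_funD; apply: measurable_sum => k;
  apply/measurable_funM/measurable_maxr => //; exact: measurable_funB.
Qed.

Lemma expectation_demand p :
  (\int[P]_(w in setT) (demand mu p (b^~ w))%:E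
   = \sum_(i < n) (mu i)%:E * (1 - P [set w | (b i w <= p)%R]))%E.
Proof.
under eq_integral do rewrite demand_indicE.
rewrite integral_sum_indic //; last by move=> i; exact: measurable_gtr_set.
by apply: eq_bigr => i _; rewrite setIT; congr (_ * _)%E; exact: probability_gtr.
Qed.

Lemma expectation_supply p :
  (\int[P]_(w in setT) (supply lam p (c^~ w))%:E
   = \sum_(j < m) (lam j)%:E * P [set w | (c j w <= p)%R])%E.
Proof.
under eq_integral do rewrite supply_indicE.
rewrite integral_sum_indic //; last by move=> j; exact: measurable_ler_set.
by apply: eq_bigr => j _; rewrite setIT.
Qed.

Lemma le_expected_clearing_loss (p q : R) :
  (\int[P]_(w in setT) (demand mu p (b^~ w))%:E
   = \int[P]_(w in setT) (supply lam p (c^~ w))%:E)%E ->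
  (\int[P]_(w in setT) (supply lam p (c^~ w))%:E)%E \is a fin_num ->
  (expected_clearing_loss P mu lam p b c <= expected_clearing_loss P mu lam q b c)%E.
Proof.
set Dem := fun w => demand mu p (b^~ w); set Sup := fun w => supply lam p (c^~ w).
set L := fun x w => clearing_loss mu lam x (b^~ w) (c^~ w).
move=> balanced fin_Sup; rewrite /expected_clearing_loss -/(L p) -/(L q).
have [Lp_ge0 Lq_ge0] : (forall w, setT w -> 0 <= L p w) /\ (forall w, setT w -> 0 <= L q w).
  by split=> w _; exact: clearing_loss_ge0.
have Dem_ge0 w : setT w -> 0 <= Dem w by move=> _; exact: demand_ge0.
have Sup_ge0 w : setT w -> 0 <= Sup w by move=> _; exact: supply_ge0.
have mL x : measurable_fun setT (L x) := measurable_clearing_loss x.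
have mDem : measurable_fun setT Dem := measurable_demand p.
have mSup : measurable_fun setT Sup := measurable_supply p.
have subgrad w : L p w + (q - p) * Sup w <= L q w + (q - p) * Dem w.
  exact: clearing_loss_subgrad.
have [le_pq|lt_qp] := leP p q.
- apply: (le_integral_balanced P measurableT (L p) (L q) Sup Dem (q - p)) => //.
  by rewrite subr_ge0.
- apply: (le_integral_balanced P measurableT (L p) (L q) Dem Sup (p - q)) => //.
  + by rewrite subr_ge0 ltW.
  + by move=> w _; have := subgrad w; lra.
  + by rewrite balanced.
Qed.

End ExpectedClearingLoss.

Theorem mainTheorem1 (R : realType) (d : measure_display)
  (Omega : measurableType d) (Z : Type) (n m : nat)
  (mu : 'I_n -> R) (lam : 'I_m -> R)
  (P : Z -> probability Omega R)
  (b : 'I_n -> Omega -> R) (c : 'I_m -> Omega -> R)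
  (F : Z -> 'I_n -> R -> R) (G : Z -> 'I_m -> R -> R)
  (hmu : forall i, 0 <= mu i) (hlam : forall j, 0 <= lam j)
  (hb_meas : forall i, measurable_fun setT (b i))
  (hc_meas : forall j, measurable_fun setT (c j))
  (hb_nonneg : forall i w, 0 <= b i w)
  (hc_nonneg : forall j w, 0 <= c j w)
  (hindep : forall z, independent_bids_costs (P z) b c)
  (hF : forall z i x, P z [set w | b i w <= x] = (F z i x)%:E)
  (hG : forall z j x, P z [set w | c j w <= x] = (G z j x)%:E)
  (p : Z -> R)
  (hbalance : forall z,
     \sum_(i < n) mu i * (1 - F z i (p z)) = \sum_(j < m) lam j * G z j (p z)) :
  forall (q : Z -> R) (z : Z),
    (expected_clearing_loss (P z) mu lam (p z) b c
     <= expected_clearing_loss (P z) mu lam (q z) b c)%E.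
Proof.
move=> q z.
have EDem : (\int[P z]_(w in setT) (demand mu (p z) (b^~ w))%:E
             = (\sum_(i < n) mu i * (1 - F z i (p z)))%:E)%E.
  rewrite expectation_demand // -sumEFin; apply: eq_bigr => i _.
  by rewrite hF EFinM EFinB.
have ESup : (\int[P z]_(w in setT) (supply lam (p z) (c^~ w))%:E
             = (\sum_(j < m) lam j * G z j (p z))%:E)%E.
  rewrite expectation_supply // -sumEFin; apply: eq_bigr => j _.
  by rewrite hG EFinM.
apply: le_expected_clearing_loss => //; first by rewrite EDem ESup hbalance.
by rewrite ESup.
Qed.
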